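(* Let $X \subseteq A$. For all subsets $S', S'' \subseteq S$ the equilibria operator $\Psi_X$ satisfies: (a) (idempotency) $\Psi_X(\Psi_X(S')) = \Psi_X(S')$; (b) (upper-continuity) $\Psi_X(S' \cup S'') = \Psi_X(S') \cup \Psi_X(S'')$; (c) (monotony) $S' \subseteq S'' \implies \Psi_X(S') \subseteq \Psi_X(S'')$.
   Context: Let $A$ be a finite set of agents. For each $a \in A$ let $S_a$ be a nonempty finite set, and let $S = \prod_{a \in A} S_a$ be the set of states. For each $a \in A$ let $\to_a \subseteq S \times S$ be a relation that is either empty or left-total (every state has at least one $\to_a$-successor), such that whenever $s \to_a s'$, either $s = s'$ or $s$ and $s'$ differ only in the $a$-component. For $X \subseteq A$ let $\to_X = \bigcup_{a \in X} \to_a$ and let $\to_X^*$ be its reflexive-transitive closure. For $S' \subseteq S$, the orbit operator is $\Omega_X(S') = \{ s' \in S : \exists s \in S',\ s \to_X^* s'\}$, and the equilibria operator is $\Psi_X(S') = \{ s \in \Omega_X(S') : \forall s' \in S,\ s \to_X^* s' \implies s' \to_X^* s \}$. *)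

From mathcomp Require Import all_boot.
Set Implicit Arguments. Unset Strict Implicit. Unset Printing Implicit Defensive.

Definition state (A : finType) (S : A -> finType) : finType := {dffun forall a : A, S a}.

Definition trans_ok (A : finType) (S : A -> finType) (tr : A -> rel (state S)) : Prop :=
  forall a : A,
    ((forall s s', ~~ tr a s s') \/ (forall s, exists s', tr a s s')) /\
    (forall s s', tr a s s' -> s = s' \/ (forall b, b != a -> s b = s' b)).

Definition transX (A : finType) (S : A -> finType) (tr : A -> rel (state S))
  (X : {set A}) : rel (state S) :=
  fun s s' => [exists a in X, tr a s s'].

Definition reachX (A : finType) (S : A -> finType) (tr : A -> rel (state S))
  (X : {set A}) : rel (state S) := connect (transX tr X).

Definition Omega (A : finType) (S : A -> finType) (tr : A -> rel (state S))
  (X : {set A}) (S' : {set state S}) : {set state S} :=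
  [set s' | [exists s in S', reachX tr X s s']].

Definition Psi (A : finType) (S : A -> finType) (tr : A -> rel (state S))
  (X : {set A}) (S' : {set state S}) : {set state S} :=
  [set s in Omega tr X S' | [forall s', reachX tr X s s' ==> reachX tr X s' s]].

From mathcomp Require Import all_boot.

(* Psi_X(S') is the orbit Omega_X(S') intersected with the set of recurrent
   states, those that can return from every state they reach.  Omega_X is a
   closure operator (extensive, monotone, idempotent) that distributes over
   unions, and intersecting with a fixed set preserves all of this. *)

Section Equilibria.

Variables (A : finType) (S : A -> finType) (tr : A -> rel (state S)) (X : {set A}).

Definition recurrent : {set state S} :=
  [set s | [forall s', reachX tr X s s' ==> reachX tr X s' s]].

Lemma PsiE (S' : {set state S}) : Psi tr X S' = Omega tr X S' :&: recurrent.
Proof. by apply/setP=> s; rewrite !inE. Qed.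

Lemma sub_Omega (S' : {set state S}) : S' \subset Omega tr X S'.
Proof.
apply/subsetP=> s Hs; rewrite inE; apply/existsP; exists s.
by rewrite Hs; exact: connect0.
Qed.

Lemma OmegaS (S' S'' : {set state S}) :
  S' \subset S'' -> Omega tr X S' \subset Omega tr X S''.
Proof.
move=> sub; apply/subsetP=> s; rewrite !inE => /existsP[t /andP[Ht Hts]].
by apply/existsP; exists t; rewrite (subsetP sub).
Qed.

Lemma Omega_idem (S' : {set state S}) : Omega tr X (Omega tr X S') = Omega tr X S'.
Proof.
apply/eqP; rewrite eqEsubset sub_Omega andbT; apply/subsetP=> s.
rewrite !inE => /existsP[t /andP[]]; rewrite inE => /existsP[u /andP[Hu Hut]] Hts.
by apply/existsP; exists u; rewrite Hu; exact: connect_trans Hut Hts.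
Qed.

Lemma OmegaU (S' S'' : {set state S}) :
  Omega tr X (S' :|: S'') = Omega tr X S' :|: Omega tr X S''.
Proof.
apply/eqP; rewrite eqEsubset subUset (OmegaS _ _ (subsetUl S' S'')).
rewrite (OmegaS _ _ (subsetUr S' S'')) !andbT.
apply/subsetP=> s; rewrite !inE => /existsP[t /andP[]]; rewrite inE.
by case/orP=> Ht Hts; apply/orP; [left | right]; apply/existsP; exists t; rewrite Ht.
Qed.

Lemma Psi_idem (S' : {set state S}) : Psi tr X (Psi tr X S') = Psi tr X S'.
Proof.
have Psi_recurrent : Psi tr X S' \subset recurrent by rewrite PsiE subsetIr.
apply/eqP; rewrite eqEsubset [Psi tr X (Psi tr X S')]PsiE.
rewrite subsetI sub_Omega Psi_recurrent !andbT PsiE setSI //.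
by apply: subset_trans (OmegaS _ _ (subsetIl _ _)) _; rewrite Omega_idem.
Qed.

Lemma PsiU (S' S'' : {set state S}) :
  Psi tr X (S' :|: S'') = Psi tr X S' :|: Psi tr X S''.
Proof. by rewrite !PsiE OmegaU setIUl. Qed.

Lemma PsiS (S' S'' : {set state S}) :
  S' \subset S'' -> Psi tr X S' \subset Psi tr X S''.
Proof. by move=> sub; rewrite !PsiE setSI // OmegaS. Qed.

End Equilibria.

Theorem proposition1 (A : finType) (S : A -> finType)
  (S_nonempty : forall a : A, 0 < #|S a|)
  (tr : A -> rel (state S)) (Htr : trans_ok tr) (X : {set A}) :
  forall S' S'' : {set state S},
    [/\ Psi tr X (Psi tr X S') = Psi tr X S',
        Psi tr X (S' :|: S'') = Psi tr X S' :|: Psi tr X S''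
      & S' \subset S'' -> Psi tr X S' \subset Psi tr X S''].
Proof. by move=> S' S''; split; [exact: Psi_idem | exact: PsiU | exact: PsiS]. Qed.
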